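(* Fix a natural number $M\ge 1$. In the random coefficients perturbed utility model described in the context, suppose Assumptions 1–6 (as stated in the context) all hold with this same $M$. Then every $M$-th order moment of the random coefficients, \[ \int \beta_{k_1,\ell_1}\cdots\beta_{k_M,\ell_M}\,d\nu(\beta),\qquad k_m\in\{1,\dots,K\},\ \ell_m\in\{1,\dots,d_{k_m}\}, \] is identified. In addition, for each $\gamma\in\{1,\dots,K\}^{M+1}$, the partial derivative $\partial_\gamma V(0)$ is identified.
   Context: Model. There are $K$ goods. For each good $k\in\{1,\dots,K\}$ there is a covariate vector $x_k=(x_{k,1},\dots,x_{k,d_k})'\in\mathbb{R}^{d_k}$ and a random coefficient vector $\beta_k=(\beta_{k,1},\dots,\beta_{k,d_k})'\in\mathbb{R}^{d_k}$; write $x=(x_1',\dots,x_K')'\in\mathbb{R}^{d}$ with $d=\sum_k d_k$, and $\beta=(\beta_1',\dots,\beta_K')'$. Let $\varepsilon$ be an unobservable of unrestricted dimension taking values in a measurable space $E$, let $B\subseteq\mathbb{R}^K$ be a feasibility set and $D:B\times E\to\mathbb{R}\cup\{-\infty\}$ a disturbance. Choices $Y(x,\beta,\varepsilon)\in\mathbb{R}^K$ satisfy \[ Y(x,\beta,\varepsilon)\in\arg\max_{y\in B}\ \sum_{k=1}^K y_k(\beta_k'x_k)+D(y,\varepsilon) \] (the argmax being nonempty). The average structural function is $\overline{Y}(x)=\int Y(x,\beta,\varepsilon)\,d\tau(\beta,\varepsilon)$ for a probability measure $\tau$ on $(\beta,\varepsilon)$ not depending on $x$; $\overline{Y}_k$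 denotes its $k$-th component. Assumption 1 (slope–intercept independence): under $\tau$, $\beta$ and $\varepsilon$ are independent, i.e. $\tau=\nu\otimes\mu$ with $\nu$ a probability measure over $\beta$ and $\mu$ one over $\varepsilon$, and $\overline{Y}(x)$ is finite. Define $\overline{Y}(x,\beta)=\int Y(x,\beta,\varepsilon)\,d\mu(\varepsilon)$, so $\overline{Y}(x)=\int\overline{Y}(x,\beta)\,d\nu(\beta)$. Let $\overline{B}$ be the convex hull of $B$ and $\overline{D}(y)=\sup\{\int D(\tilde Y(\varepsilon),\varepsilon)\,d\mu(\varepsilon):\tilde Y:E\to B\text{ measurable},\ \int\tilde Y\,d\mu=y\}$ (with $\sup\emptyset=-\infty$). Assumption 2: (i) $\overline{Y}(x,\beta)$ is the unique element of (equivalently, equals) $\arg\max_{y\in\overline{B}}\sum_k y_k(\beta_k'x_k)+\overline{D}(y)$; (ii) $\overline{B}$ is nonempty, closed and convex; (iii) $\overline{D}:\mathbb{R}^K\to\mathbb{R}\cup\{-\infty\}$ is concave, upper semicontinuous, and finite at some $y\in\overline{B}$. Define the integrated indirect utility $V:\mathbb{R}^K\to\mathbb{R}$, $V(u)=\max_{y\in\overline{B}}\sum_k y_ku_k+\overline{D}(y)$. For $\gamma=(\gamma_1,\dots,\gamma_m)\in\{1,\dots,K\}^m$ write $\partial_\gamma V=\partial_{\gamma_1}\cdots\partial_{\gamma_m}V$, derivatives being with respect to the arguments of $V$. Assumption 3: all covariates $x_{k,\ell}$ are continuous, and each $x_k$ is a vector of regressors specific to good $k$ (it enters only the index $\beta_k'x_k$).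 Assumption 4 (for $M$): $\int\beta_{1,1}^M\,d\nu(\beta)$ is finite, known a priori, and nonzero. Assumption 5 (for $M$): (i) for each good $k$ and every $M$-th order partial derivative in $x$, integration and differentiation can be interchanged at $x=0$: $\partial_{x_{k_1,\ell_1}}\cdots\partial_{x_{k_M,\ell_M}}\overline{Y}_k(0)=\int\partial_{x_{k_1,\ell_1}}\cdots\partial_{x_{k_M,\ell_M}}\overline{Y}_k(0,\beta)\,d\nu(\beta)$; (ii) every $M$-th order moment $\int\beta_{k_1,\ell_1}\cdots\beta_{k_M,\ell_M}\,d\nu(\beta)$ exists and is finite; (iii) $V$ is $(M+1)$-times continuously differentiable in a neighborhood of $0$; (iv) $\partial_\gamma V(0)\neq0$ for each $\gamma\in\{1,\dots,K\}^{M+1}$; (v) $\overline{Y}(x)$ is known for $x$ in a neighborhood of $0$, or more generally on $H\cap\mathbb{R}^d_+$ for some neighborhood $H$ of $0$ (derivatives at $0$ then being one-sided). Assumption 6 (for $M$): for each tuple of good indices $(k_1,\dots,k_M)\in\{1,\dots,K\}^M$ there exist characteristic indices $\ell_m\in\{1,\dots,d_{k_m}\}$ such that $\int\beta_{k_1,\ell_1}\cdots\beta_{k_M,\ell_M}\,d\nu(\beta)$ exists and is nonzero (which indices is not assumed known). Identification: a quantity is identified if it is uniquely determined by the objects assumed known (the average structural function on the stated region and the quantities assumed known a priori), i.e. all model specifications $(B,D,\mu,\nu)$ satisfying the hypotheses and generating the same known objects yield the same value of the quantity. *)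

From HB Require Import structures.
From mathcomp Require Import all_boot all_order all_algebra.
From mathcomp Require Import all_classical all_reals all_analysis.
Set Implicit Arguments. Unset Strict Implicit. Unset Printing Implicit Defensive.
Import Order.TTheory GRing.Theory Num.Theory.
Local Open Scope classical_set_scope.
Local Open Scope ring_scope.

Section S.
Context {R : realType}.

Definition nearv (I : finType) (x y : I -> R) (e : R) : Prop :=
  forall i, `|x i - y i| < e.

Definition shiftv (I : finType) (x : I -> R) (j : I) (h : R) : I -> R :=
  fun i => x i + (if i == j then h else 0).

Definition has_pd_within (I : finType) (S : set (I -> R)) (f : (I -> R) -> R)
  (j : I) (x : I -> R) (l : R) : Prop :=
  (forall del, 0 < del -> exists h, 0 < `|h| < del /\ S (shiftv x j h)) /\
  (forall eps, 0 < eps -> exists2 del, 0 < del & forall h, 0 < `|h| < del ->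
     S (shiftv x j h) -> `|(f (shiftv x j h) - f x) / h - l| < eps).

Definition pd (I : finType) (S : set (I -> R)) (f : (I -> R) -> R) (j : I) :
  (I -> R) -> R := fun x => xget 0 [set l | has_pd_within S f j x l].

Definition pdn (I : finType) (S : set (I -> R)) (f : (I -> R) -> R) (js : seq I) :
  (I -> R) -> R := foldr (fun j g => pd S g j) f js.

Fixpoint pdn_ex (I : finType) (S : set (I -> R)) (f : (I -> R) -> R) (js : seq I)
  (x : I -> R) : Prop :=
  match js with
  | [::] => True
  | j :: js' => (exists2 e, 0 < e & forall y, S y -> nearv x y e -> pdn_ex S f js' y)
                /\ exists l, has_pd_within S (pdn S f js') j x l
  end.
End S.

Section Model.
Local Open Scope ring_scope.
Context {R : realType} {K : nat} (dk : 'I_K -> nat).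

(* index set of the covariate / coefficient coordinates (k, l), l < d_k *)
Definition idx : finType := {k : 'I_K & 'I_(dk k)}.

Definition zerov (I : finType) : I -> R := fun _ => 0.

Definition contv (I : finType) (f : (I -> R) -> R) (x : I -> R) : Prop :=
  forall eps, 0 < eps -> exists2 del, 0 < del & forall y, nearv x y del -> `|f y - f x| < eps.

Definition nbhd0 (H : set (idx -> R)) : Prop :=
  exists2 e, 0 < e & forall x, nearv (@zerov idx) x e -> H x.

(* the region on which the ASF is known: H, or H intersected with R^d_+ *)
Definition region (H : set (idx -> R)) (orth : bool) : set (idx -> R) :=
  fun x => H x /\ (orth -> forall i, 0 <= x i).

Definition index_u (b x : idx -> R) : 'I_K -> R :=
  fun k => \sum_(l < dk k) b (existT _ k l) * x (existT _ k l).

Definition convexv (C : set ('I_K -> R)) : Prop :=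
  forall y z t, 0 <= t <= 1 -> C y -> C z -> C (fun k => t * y k + (1 - t) * z k).

Definition closedv (C : set ('I_K -> R)) : Prop :=
  forall y, (forall e, 0 < e -> exists z, C z /\ nearv y z e) -> C y.

Definition conv_hull (B : set ('I_K -> R)) : set ('I_K -> R) :=
  \bigcap_(C in [set C | convexv C /\ B `<=` C]) C.

Definition obj (Df : ('I_K -> R) -> \bar R) (u y : 'I_K -> R) : \bar R :=
  ((\sum_k y k * u k)%:E + Df y)%E.

Context {dE : measure_display} {E : measurableType dE}.

Definition Dbar (mu : probability E R) (B : set ('I_K -> R))
  (D : ('I_K -> R) -> E -> \bar R) (y : 'I_K -> R) : \bar R :=
  ereal_sup [set (\int[mu]_e D (Yt e) e)%E | Yt in
    [set Yt : E -> 'I_K -> R | (forall e, B (Yt e)) /\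
       forall k, mu.-integrable setT (fun e => (Yt e k)%:E) /\
                 (\int[mu]_e (Yt e k)%:E)%E = (y k)%:E]].

Definition Vfun (mu : probability E R) (B : set ('I_K -> R))
  (D : ('I_K -> R) -> E -> \bar R) (u : 'I_K -> R) : R :=
  fine (ereal_sup [set obj (Dbar mu B D) u y | y in conv_hull B]).

Definition Ybar_beta (mu : probability E R) (Y : (idx -> R) -> (idx -> R) -> E -> 'I_K -> R)
  (x b : idx -> R) (k : 'I_K) : \bar R :=
  (\int[mu]_e (Y x b e k)%:E)%E.

Context {dO : measure_display} {Om : measurableType dO}.

Definition Ybar (P : probability Om R) (beta : Om -> idx -> R) (mu : probability E R)
  (Y : (idx -> R) -> (idx -> R) -> E -> 'I_K -> R) (x : idx -> R) (k : 'I_K) : \bar R :=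
  (\int[(P \x mu)%E]_z (Y x (beta z.1) z.2 k)%:E)%E.

Definition moment (P : probability Om R) (beta : Om -> idx -> R) (s : seq idx) : \bar R :=
  (\int[P]_w (\prod_(i <- s) beta w i)%:E)%E.

End Model.
Arguments zerov {R} I.

Section Assumptions.
Local Open Scope ring_scope.
Context {R : realType} {K : nat} (dk : 'I_K -> nat).
Context {dE : measure_display} {E : measurableType dE}.
Context {dO : measure_display} {Om : measurableType dO}.

(* A model specification: nu is the law of beta under P; mu the law of eps;
   B feasibility set, D disturbance, Y the choice function Y(x, beta, eps). *)
Record model_assumptions (M : nat) (i0 : idx dk) (S : set (idx dk -> R))
  (P : probability Om R) (beta : Om -> idx dk -> R) (mu : probability E R)
  (B : set ('I_K -> R)) (D : ('I_K -> R) -> E -> \bar R)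
  (Y : (idx dk -> R) -> (idx dk -> R) -> E -> 'I_K -> R) : Prop := {
  beta_meas : forall i, measurable_fun setT (fun w => beta w i);
  D_values : forall y e, B y -> (D y e < +oo)%E;
  Y_choice : forall x b e, B (Y x b e) /\
     forall y, B y -> (obj (D^~ e) (index_u b x) y <= obj (D^~ e) (index_u b x) (Y x b e))%E;
  (* Assumption 1 (independence is built in via the product measure P \x mu) *)
  A1 : forall x k, (P \x mu)%E.-integrable setT (fun z => (Y x (beta z.1) z.2 k)%:E);
  A2i : forall x b, exists yb : 'I_K -> R,
     (forall k, mu.-integrable setT (fun e => (Y x b e k)%:E) /\
                Ybar_beta mu Y x b k = (yb k)%:E) /\
     conv_hull B yb /\
     (forall y, conv_hull B y -> (obj (Dbar mu B D) (index_u b x) y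
                                  <= obj (Dbar mu B D) (index_u b x) yb)%E) /\
     (forall y, conv_hull B y ->
        (forall z, conv_hull B z -> (obj (Dbar mu B D) (index_u b x) z
                                     <= obj (Dbar mu B D) (index_u b x) y)%E) -> y = yb);
  A2ii : (exists y, conv_hull B y) /\ closedv (conv_hull B) /\ convexv (conv_hull B);
  A2iii : (forall y, (Dbar mu B D y < +oo)%E) /\
     (forall y z t, 0 < t < 1 ->
        (t%:E * Dbar mu B D y + (1 - t)%R%:E * Dbar mu B D z
          <= Dbar mu B D (fun k => (t * y k + (1 - t) * z k)%R))%E) /\
     (forall y a, (Dbar mu B D y < a%:E)%E ->
        exists2 e, 0 < e & forall z, nearv y z e -> (Dbar mu B D z < a%:E)%E) /\
     (exists y, conv_hull B y /\ Dbar mu B D y \is a fin_num);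
  V_max : forall u, exists y, conv_hull B y /\ obj (Dbar mu B D) u y \is a fin_num /\
     forall z, conv_hull B z -> (obj (Dbar mu B D) u z <= obj (Dbar mu B D) u y)%E;
  (* Assumption 4 (knowledge of the value is imposed in the theorem) *)
  A4 : P.-integrable setT (fun w => (beta w i0 ^+ M)%:E) /\
       (\int[P]_w (beta w i0 ^+ M)%:E)%E != 0%E;
  A5i : forall (k : 'I_K) (t : M.-tuple (idx dk)),
     pdn_ex S (fun x => fine (Ybar P beta mu Y x k)) t (zerov (idx dk)) /\
     (forall w, pdn_ex S (fun x => fine (Ybar_beta mu Y x (beta w) k)) t (zerov (idx dk))) /\
     P.-integrable setT
       (fun w => (pdn S (fun x => fine (Ybar_beta mu Y x (beta w) k)) t (zerov (idx dk)))%:E) /\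
     (pdn S (fun x => fine (Ybar P beta mu Y x k)) t (zerov (idx dk)))%:E =
       (\int[P]_w (pdn S (fun x => fine (Ybar_beta mu Y x (beta w) k)) t (zerov (idx dk)))%:E)%E;
  A5ii : forall t : M.-tuple (idx dk),
     P.-integrable setT (fun w => (\prod_(i <- t) beta w i)%:E);
  A5iii : exists2 e, 0 < e & forall js : seq 'I_K, (size js <= M.+1)%N ->
     forall u, nearv (zerov 'I_K) u e ->
       pdn_ex setT (Vfun mu B D) js u /\ contv (pdn setT (Vfun mu B D) js) u;
  A5iv : forall g : M.+1.-tuple 'I_K, pdn setT (Vfun mu B D) g (zerov 'I_K) != 0;
  A6 : forall ks : M.-tuple 'I_K, exists t : M.-tuple (idx dk),
     (forall m : 'I_M, tag (tnth t m) = tnth ks m) /\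
     P.-integrable setT (fun w => (\prod_(i <- t) beta w i)%:E) /\
     moment P beta t != 0%E
}.
End Assumptions.

From HB Require Import structures.
From mathcomp Require Import all_boot all_order all_algebra.
From mathcomp Require Import all_classical all_reals all_analysis.
From mathcomp Require Import ring lra zify.
Import Order.TTheory GRing.Theory Num.Theory numFieldNormedType.Exports.
Set Implicit Arguments. Unset Strict Implicit. Unset Printing Implicit Defensive.
Local Open Scope classical_set_scope.
Local Open Scope ring_scope.

(* By the envelope theorem, the mean choice for fixed coefficients b is the
   gradient of the integrated indirect utility V at the index vector
   (b_k' x_k)_k.  The chain rule, followed by differentiation under the
   integral sign, turns the M-th partial derivative of the average structural
   function at 0 in the directions t = ((k_1,l_1),...,(k_M,l_M)) into
   E[beta_t] * d_{k_1...k_M k} V(0).  The (M+1)-st partials of V at 0 are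
   symmetric (Schwarz) and nonzero.  For fixed goods k_1...k_M, any t with a
   nonzero moment (Assumption 6) therefore identifies k |-> d_{k_1...k_M k} V(0)
   up to a nonzero factor; the known moment E[beta_{1,1}^M] identifies
   d_{1...1} V(0), and changing one index at a time reaches every derivative of
   order M+1.  Dividing the known derivatives of the average structural
   function by them recovers every moment of order M. *)

Section PartialDerivative.
Context {R : realType} {I : finType}.
Implicit Types (x y u : I -> R) (f g : (I -> R) -> R) (S : set (I -> R)).

Lemma eq0_of_norm_ltDD (a : R) : (forall e, 0 < e -> `|a| < e + e) -> a = 0.
Proof.
move=> small; apply/normr0_eq0/eqP; rewrite eq_le normr_ge0 andbT.
apply/ler_addgt0Pr => e e0; rewrite add0r ltW // [e in _ < e]splitr.
by apply: small; rewrite divr_gt0.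
Qed.

Lemma nearv_subball x0 x (r : R) : nearv x0 x r ->
  exists2 d, 0 < d & forall y, nearv x y d -> nearv x0 y r.
Proof.
move=> hx; exists (\big[Order.min/1]_i (r - `|x0 i - x i|)).
  by apply/bigmin_gtP; split => // i _; rewrite subr_gt0.
move=> y hy i; have := hy i.
move=> /lt_le_trans/(_ (bigmin_le _ i (fun i => r - `|x0 i - x i|))) h.
by rewrite (le_lt_trans (ler_distD (x i) _ _)) // -ltrBrDl.
Qed.

Lemma nearv_shiftv x j (h d : R) : `|h| < d -> nearv x (shiftv x j h) d.
Proof.
move=> hd i; rewrite /shiftv opprD addrA subrr sub0r normrN.
by case: (i == j); rewrite ?normr0 (le_lt_trans _ hd).
Qed.

Lemma nearv_shiftv2 u a b (s t d : R) : `|s| + `|t| < d ->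
  nearv u (shiftv (shiftv u a s) b t) d.
Proof.
move=> hd i; rewrite /shiftv -addrA opprD addrA subrr sub0r normrN.
rewrite (le_lt_trans (ler_normD _ _)) // (le_lt_trans _ hd) //.
by apply: lerD; case: (_ == _); rewrite ?normr0.
Qed.

Lemma shiftvD x j (h h' : R) : shiftv (shiftv x j h) j h' = shiftv x j (h' + h).
Proof.
apply/funext => i; rewrite /shiftv; case: (i == j); rewrite ?addr0 //.
by rewrite -addrA [h + h']addrC.
Qed.

Lemma shiftvC x a b (s t : R) :
  shiftv (shiftv x a s) b t = shiftv (shiftv x b t) a s.
Proof. by apply/funext => i; rewrite /shiftv -!addrA [X in _ + X]addrC. Qed.

Lemma shiftv0 x j : shiftv x j 0 = x.
Proof. by apply/funext => i; rewrite /shiftv; case: (i == j); rewrite addr0. Qed.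

Lemma has_pd_within_unique S f j x (l1 l2 : R) :
  has_pd_within S f j x l1 -> has_pd_within S f j x l2 -> l1 = l2.
Proof.
move=> [approach h1] [_ h2]; apply/eqP; rewrite -subr_eq0; apply/eqP.
apply: eq0_of_norm_ltDD => e e0.
have [d1 d10 hd1] := h1 e e0; have [d2 d20 hd2] := h2 e e0.
have [h [/andP[h0]]] : exists h, 0 < `|h| < Order.min d1 d2 /\ S (shiftv x j h).
  by apply: approach; rewrite lt_min d10 d20.
rewrite lt_min => /andP[hd1' hd2'] hS.
have q1 := hd1 h; rewrite h0 hd1' in q1; have {}q1 := q1 isT hS.
have q2 := hd2 h; rewrite h0 hd2' in q2; have {}q2 := q2 isT hS.
rewrite (le_lt_trans (ler_distD ((f (shiftv x j h) - f x) / h) _ _)) //.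
by rewrite distrC ltrD.
Qed.

Lemma pd_val S f j x l : has_pd_within S f j x l -> pd S f j x = l.
Proof.
move=> hl; apply: xget_unique => // l' hl'.
exact: has_pd_within_unique hl' hl.
Qed.

Lemma eq_pd S f g j x :
  (forall y, S y -> f y = g y) -> S x -> pd S f j x = pd S g j x.
Proof.
move=> fg hx; rewrite /pd; congr (xget 0 _); apply/funext => l.
apply/propext; split => -[approach hl]; split => // e e0;
  have [d d0 hd] := hl e e0; exists d => // h hh hS; have := hd h hh hS;
  by rewrite !fg.
Qed.

Lemma eq_pdn S f g js :
  (forall y, S y -> f y = g y) -> forall x, S x -> pdn S f js x = pdn S g js x.
Proof.
move=> fg; elim: js => [|j js IH] x hx /=; first exact: fg.
exact: eq_pd.
Qed.

Lemma has_pd_near f g x0 (r : R) j x l :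
  (forall y, nearv x0 y r -> f y = g y) -> nearv x0 x r ->
  has_pd_within setT f j x l -> has_pd_within setT g j x l.
Proof.
move=> fg hx [approach hl]; split => // e e0.
have [d d0 hd] := hl e e0; have [d' d'0 hd'] := nearv_subball hx.
exists (Order.min d d'); first by rewrite lt_min d0 d'0.
move=> h /andP[h0]; rewrite lt_min => /andP[hhd hhd'] _.
rewrite -!fg //; last exact/hd'/nearv_shiftv.
by apply: hd; rewrite ?h0.
Qed.

Lemma eq_pd_near f g x0 (r : R) j x :
  (forall y, nearv x0 y r -> f y = g y) -> nearv x0 x r ->
  pd setT f j x = pd setT g j x.
Proof.
move=> fg hx; rewrite /pd; congr (xget 0 _); apply/funext => l.
apply/propext; split; first exact: has_pd_near fg hx.
by apply: has_pd_near hx => y hy; rewrite fg.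
Qed.

Lemma eq_pdn_near f g x0 (r : R) js :
  (forall y, nearv x0 y r -> f y = g y) ->
  forall x, nearv x0 x r -> pdn setT f js x = pdn setT g js x.
Proof.
move=> fg; elim: js => [|j js IH] x hx /=; first exact: fg.
exact: eq_pd_near IH hx.
Qed.

Lemma pdn_cat S f a b : pdn S f (a ++ b) = pdn S (pdn S f b) a.
Proof. by rewrite /pdn foldr_cat. Qed.

Lemma has_pd_is_derive f a w (s l : R) :
  has_pd_within setT f a (shiftv w a s) l ->
  is_derive s 1 (fun t => f (shiftv w a t)) l.
Proof.
move=> [_ hl].
have quotient_cvg : h^-1 *: (((fun t => f (shiftv w a t)) \o shift s) (h *: (1 : R^o))
    - f (shiftv w a s)) @[h --> (0 : R)^'] --> l.
  apply/cvgrPdist_lt => e e0; have [d d0 hd] := hl e e0.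
  apply/nbhs_ballP; exists d => //= h; rewrite /ball /= sub0r normrN => hhd hne.
  have := hd h; rewrite normr_gt0 hne hhd => /(_ isT Logic.I).
  rewrite distrC /shift /= -[X in shiftv w a (X + s)]/(h * 1) mulr1 -shiftvD.
  by rewrite -[h^-1 *: _]/(h^-1 * _) mulrC.
apply: DeriveDef; first exact: cvgP quotient_cvg.
exact: norm_cvg_lim quotient_cvg.
Qed.

Lemma sum_mul_shiftv (y u : I -> R) k (h : R) :
  \sum_i y i * shiftv u k h i = \sum_i y i * u i + y k * h.
Proof.
rewrite /shiftv; under eq_bigr do rewrite mulrDr; rewrite big_split /=; congr (_ + _).
by rewrite (bigD1 k) //= eqxx big1 ?addr0 // => i /negbTE ->; rewrite mulr0.
Qed.

Lemma has_pd_subgradient f u k (y l : R) :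
  (forall h, y * h <= f (shiftv u k h) - f u) -> has_pd_within setT f k u l -> l = y.
Proof.
move=> sub [_ hl]; apply/eqP; rewrite eq_le; apply/andP; split;
  apply/ler_addgt0Pr => e e0; have [del del0 hd] := hl e e0;
  have half : 0 < `|del / 2| < del
    by rewrite gtr0_norm ?divr_gt0 //; apply/andP; split; lra.
- have h0 : - (del / 2) < 0 by rewrite oppr_lt0 divr_gt0.
  have := hd (- (del / 2)); rewrite normrN => /(_ half Logic.I).
  rewrite ltr_norml => /andP[+ _].
  have : (f (shiftv u k (- (del / 2))) - f u) / - (del / 2) <= y.
    by rewrite ler_ndivrMr.
  lra.
- have h0 : 0 < del / 2 by rewrite divr_gt0.
  have := hd (del / 2) half Logic.I; rewrite ltr_norml => /andP[_].
  have : y <= (f (shiftv u k (del / 2)) - f u) / (del / 2).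
    by rewrite ler_pdivlMr.
  lra.
Qed.

End PartialDerivative.

Lemma MVT0 {R : realType} (phi dphi : R -> R) (s : R) :
  (forall x : R, `|x| <= `|s| -> is_derive x 1 phi (dphi x)) ->
  exists2 c, `|c| <= `|s| & phi s - phi 0 = dphi c * s.
Proof.
move=> hd.
have cont a b : `|a| <= `|s| -> `|b| <= `|s| -> {within `[a, b], continuous phi}.
  move=> ha hb; apply: derivable_within_continuous => x.
  rewrite in_itv /= => /andP[h1 h2]; apply: (@ex_derive _ _ _ _ _ _ _ (hd x _)).
  rewrite ler_norml; move: ha hb; rewrite !ler_norml => /andP[? ?] /andP[? ?].
  apply/andP; split; lra.
have hs0 : `|0 : R| <= `|s| by rewrite normr0.
have [s0|s0|->] := ltgtP s 0.
- have hd' x : x \in `]s, 0[ -> is_derive x 1 phi (dphi x).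
    rewrite in_itv /= => /andP[? ?]; apply: hd.
    by rewrite ltr0_norm // ltr0_norm //; lra.
  have [c hc e] := MVT s0 hd' (cont s 0 (lexx _) hs0).
  exists c; first by move: hc; rewrite in_itv /= => /andP[? ?];
      rewrite ltr0_norm // ltr0_norm //; lra.
  by apply: oppr_inj; rewrite opprB e sub0r mulrN.
- have hd' x : x \in `]0, s[ -> is_derive x 1 phi (dphi x).
    rewrite in_itv /= => /andP[? ?]; apply: hd.
    by rewrite gtr0_norm // gtr0_norm //; lra.
  have [c hc e] := MVT s0 hd' (cont 0 s hs0 (lexx _)).
  exists c; first by move: hc; rewrite in_itv /= => /andP[? ?];
      rewrite gtr0_norm // gtr0_norm //; lra.
  by rewrite e subr0.
- by exists 0; rewrite ?normr0 // subrr mulr0.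
Qed.

Section Schwarz.
Context {R : realType} {I : finType}.
Variables (F : (I -> R) -> R) (a b : I) (u : I -> R) (rho : R).
Hypothesis rho_gt0 : 0 < rho.
Hypothesis pdF_a : forall v, nearv u v rho -> exists l, has_pd_within setT F a v l.
Hypothesis pdF_b : forall v, nearv u v rho -> exists l, has_pd_within setT F b v l.
Hypothesis pdF_ab :
  forall v, nearv u v rho -> exists l, has_pd_within setT (pd setT F a) b v l.
Hypothesis pdF_ba :
  forall v, nearv u v rho -> exists l, has_pd_within setT (pd setT F b) a v l.

Let Fa := pd setT F a.
Let Fb := pd setT F b.
Let Fab := pd setT Fa b.
Let Fba := pd setT Fb a.

Let is_derive_shiftv (G : (I -> R) -> R) c w :
  (forall v, nearv u v rho -> exists l, has_pd_within setT G c v l) ->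
  forall x, nearv u (shiftv w c x) rho ->
  is_derive x 1 (fun t => G (shiftv w c t)) (pd setT G c (shiftv w c x)).
Proof.
move=> pdG x /pdG [l hl]; rewrite (pd_val hl); exact: has_pd_is_derive.
Qed.

(* Applying the mean value theorem twice, in either order, to the second
   difference F(u+sa+tb) - F(u+sa) - F(u+tb) + F(u). *)
Lemma second_difference_MVT s t : `|s| + `|t| < rho -> exists s1 t1 s2 t2,
  [/\ `|s1| <= `|s|, `|t1| <= `|t|, `|s2| <= `|s|, `|t2| <= `|t| &
   Fab (shiftv (shiftv u a s1) b t1) * t * s =
   Fba (shiftv (shiftv u b t2) a s2) * s * t].
Proof.
move=> hst.
have near_ab x y : `|x| <= `|s| -> `|y| <= `|t| -> nearv u (shiftv (shiftv u a x) b y) rho.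
  by move=> hx hy; apply: nearv_shiftv2; apply: le_lt_trans (lerD hx hy) hst.
have near_ba x y : `|x| <= `|s| -> `|y| <= `|t| -> nearv u (shiftv (shiftv u b y) a x) rho.
  by move=> hx hy; rewrite shiftvC; apply: near_ab.
have ht0 : `|0 : R| <= `|t| by rewrite normr0.
have hs0 : `|0 : R| <= `|s| by rewrite normr0.
have [s1 hs1 e1] := @MVT0 _
  ((fun x => F (shiftv (shiftv u b t) a x)) - (fun x => F (shiftv (shiftv u b 0) a x)))
  (fun x => Fa (shiftv (shiftv u b t) a x) - Fa (shiftv (shiftv u b 0) a x)) s
  (fun x hx => is_deriveB (is_derive_shiftv pdF_a (near_ba _ _ hx (lexx _)))
                          (is_derive_shiftv pdF_a (near_ba _ _ hx ht0))).
have [t1 ht1 e2] := @MVT0 _ (fun y => Fa (shiftv (shiftv u a s1) b y))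
  (fun y => Fab (shiftv (shiftv u a s1) b y)) t
  (fun y hy => is_derive_shiftv pdF_ab (near_ab _ _ hs1 hy)).
have [t2 ht2 e3] := @MVT0 _
  ((fun y => F (shiftv (shiftv u a s) b y)) - (fun y => F (shiftv (shiftv u a 0) b y)))
  (fun y => Fb (shiftv (shiftv u a s) b y) - Fb (shiftv (shiftv u a 0) b y)) t
  (fun y hy => is_deriveB (is_derive_shiftv pdF_b (near_ab _ _ (lexx _) hy))
                          (is_derive_shiftv pdF_b (near_ab _ _ hs0 hy))).
have [s2 hs2 e4] := @MVT0 _ (fun x => Fb (shiftv (shiftv u b t2) a x))
  (fun x => Fba (shiftv (shiftv u b t2) a x)) s
  (fun x hx => is_derive_shiftv pdF_ba (near_ba _ _ hx ht2)).
exists s1, t1, s2, t2; split => //.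
move: e1 e3; rewrite /= => e1 e3.
rewrite !(shiftvC u b a) in e1 e4 *.
by rewrite -e2 -e4 -e1 -e3 !fctE !(shiftvC u b a) !shiftv0; lra.
Qed.

Lemma schwarz : contv Fab u -> contv Fba u -> Fab u = Fba u.
Proof.
move=> cont_ab cont_ba; apply/eqP; rewrite -subr_eq0; apply/eqP.
apply: eq0_of_norm_ltDD => e e0.
have [d1 d10 hd1] := cont_ab e e0; have [d2 d20 hd2] := cont_ba e e0.
set d := Order.min rho (Order.min d1 d2).
have d_rho : d <= rho by rewrite ge_min lexx.
have d_d1 : d <= d1 by rewrite /d !ge_min lexx orbT.
have d_d2 : d <= d2 by rewrite /d !ge_min lexx !orbT.
have d0 : 0 < d by rewrite !lt_min rho_gt0 d10 d20.
pose s := d / 3.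
have s0 : 0 < s by rewrite divr_gt0.
have hs : `|s| + `|s| < d by rewrite gtr0_norm // /s; lra.
have [s1 [t1 [s2 [t2 [h1 h2 h3 h4 heq]]]]] :=
  second_difference_MVT (lt_le_trans hs d_rho).
have q1 := hd1 (shiftv (shiftv u a s1) b t1)
  (nearv_shiftv2 _ _ _ (le_lt_trans (lerD h1 h2) (lt_le_trans hs d_d1))).
have q2 := hd2 (shiftv (shiftv u b t2) a s2)
  (nearv_shiftv2 _ _ _ (le_lt_trans (lerD h4 h3) (lt_le_trans hs d_d2))).
have sn0 : s != 0 by rewrite gt_eqF.
have {}heq : Fab (shiftv (shiftv u a s1) b t1) = Fba (shiftv (shiftv u b t2) a s2).
  by apply: (mulIf sn0); apply: (mulIf sn0); rewrite heq -mulrA [s * s]mulrC mulrA.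
apply: le_lt_trans (ler_distD (Fab (shiftv (shiftv u a s1) b t1)) _ _) _.
by rewrite {2}heq distrC ltrD.
Qed.

End Schwarz.

Section LinearIndex.
Context {R : realType} {K : nat} (dk : 'I_K -> nat).
Implicit Types (b x : idx dk -> R).

Lemma index_u_shiftv b x (j : idx dk) (h : R) :
  index_u b (shiftv x j h) = shiftv (index_u b x) (tag j) (b j * h).
Proof.
apply/funext => k; rewrite /index_u /shiftv.
under eq_bigr do rewrite mulrDr; rewrite big_split /=; congr (_ + _).
case: j => kj lj /=; have [ekj|nkj] := eqVneq k kj.
- subst kj; rewrite (bigD1 lj) //= eq_Tagged /= eqxx big1 ?addr0 // => l hl.
  by rewrite eq_Tagged /= (negbTE hl) mulr0.
- rewrite big1 // => l _; case: ifP => [/eq_tag /= ekj|_]; last by rewrite mulr0.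
  by rewrite ekj eqxx in nkj.
Qed.

Lemma index_u0 b : index_u b (zerov (idx dk)) = zerov 'I_K.
Proof. by apply/funext => k; rewrite /index_u big1 // => l _; rewrite /zerov mulr0. Qed.

Definition coef_norm b : R := 1 + \sum_k \sum_(l < dk k) `|b (existT _ k l)|.

Lemma coef_norm_gt0 b : 0 < coef_norm b.
Proof.
rewrite /coef_norm ltr_wpDr //.
by apply: sumr_ge0 => k _; apply: sumr_ge0.
Qed.

Lemma nearv_index_u b x (r : R) : 0 < r -> nearv (zerov _) x r ->
  nearv (zerov _) (index_u b x) (coef_norm b * r).
Proof.
move=> r0 hx k; rewrite /zerov sub0r normrN /index_u.
apply: le_lt_trans (ler_norm_sum _ _ _) _.
apply: (@le_lt_trans _ _ ((\sum_(l < dk k) `|b (existT _ k l)|) * r)).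
  rewrite mulr_suml; apply: ler_sum => l _; rewrite normrM ler_wpM2l //.
  by have := hx (existT _ k l); rewrite /zerov sub0r normrN => /ltW.
rewrite ltr_pM2r // /coef_norm (bigD1 k) //=.
have : 0 <= \sum_(k' < K | k' != k) \sum_(l < dk k') `|b (existT _ k' l)|.
  by apply: sumr_ge0 => k' _; apply: sumr_ge0.
lra.
Qed.

Lemma has_pd_within_index_u (S : set (idx dk -> R)) (F : (idx dk -> R) -> R)
    (G : ('I_K -> R) -> R) (c : R) b x j (dd lg : R) :
  0 < dd -> S x ->
  (forall del, 0 < del -> exists h, 0 < `|h| < del /\ S (shiftv x j h)) ->
  (forall y, S y -> nearv x y dd -> F y = c * G (index_u b y)) ->
  has_pd_within setT G (tag j) (index_u b x) lg ->
  has_pd_within S F j x (b j * c * lg).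
Proof.
move=> dd0 Sx approach FG [_ hlg]; split => // eps eps0.
have Fx : F x = c * G (index_u b x) by apply: FG => // i; rewrite subrr normr0.
have Fxh h : `|h| < dd -> S (shiftv x j h) ->
    F (shiftv x j h) = c * G (shiftv (index_u b x) (tag j) (b j * h)).
  by move=> hdd Sxh; rewrite FG ?index_u_shiftv //; apply: nearv_shiftv.
have [bj0|bj_neq0] := eqVneq (b j) 0.
  exists dd => // h /andP[_ hdd] Sxh.
  by rewrite Fxh // Fx bj0 mul0r shiftv0 subrr !mul0r subr0 normr0.
have eps'0 : 0 < eps / (`|b j * c| + 1) by rewrite divr_gt0 // ltr_wpDl.
have [d1 d10 hd1] := hlg _ eps'0.
have bj_gt0 : 0 < `|b j| by rewrite normr_gt0.
exists (Order.min dd (d1 / `|b j|)); first by rewrite lt_min dd0 divr_gt0.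
move=> h /andP[h0]; rewrite lt_min => /andP[hdd hd1'] Sxh.
rewrite Fxh // Fx.
have bjh : 0 < `|b j * h| < d1.
  by rewrite normrM mulr_gt0 //=; move: hd1'; rewrite ltr_pdivlMr // mulrC.
have := hd1 _ bjh Logic.I.
set N := G (shiftv (index_u b x) (tag j) (b j * h)) - G (index_u b x).
have -> : (c * G (shiftv (index_u b x) (tag j) (b j * h)) - c * G (index_u b x)) / h
    - b j * c * lg = b j * c * (N / (b j * h) - lg).
  by rewrite /N; field; rewrite bj_neq0 -normr_gt0 h0.
move=> hlt; rewrite normrM.
apply: le_lt_trans (ler_wpM2l (normr_ge0 _) (ltW hlt)) _.
rewrite mulrA ltr_pdivrMr ?ltr_wpDl //.
have := normr_ge0 (b j * c); nra.
Qed.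

End LinearIndex.

Lemma region_shiftv_approach {R : realType} {K : nat} (dk : 'I_K -> nat)
    (H : set (idx dk -> R)) orth (r : R) x j :
  (forall y, nearv (zerov _) y r -> H y) -> region H orth x -> nearv (zerov _) x r ->
  forall del, 0 < del -> exists h, 0 < `|h| < del /\ region H orth (shiftv x j h).
Proof.
move=> ball_H [_ orth_x] hxr del del0; have [dd dd0 sub] := nearv_subball hxr.
set m := Order.min del dd.
have m0 : 0 < m by rewrite lt_min del0 dd0.
have m_del : m <= del by rewrite ge_min lexx.
have m_dd : m <= dd by rewrite ge_min lexx orbT.
exists (m / 2); split; first by rewrite gtr0_norm; [apply/andP; split; lra | lra].
split; first by apply/ball_H/sub/nearv_shiftv; rewrite gtr0_norm; lra.
by move=> ho i; have := orth_x ho i; rewrite /shiftv; case: (i == j) => ?; lra.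
Qed.

Section SwapInvariance.
Context {R : fieldType} {T : Type}.
Implicit Types (c : seq T -> R) (n : nat).

Definition swap_invariant c n := forall pre a b post,
  (size pre + size post + 2 = n)%N ->
  c (pre ++ a :: b :: post) = c (pre ++ b :: a :: post).

Lemma swap_invariant_rcons c n : swap_invariant c n ->
  forall s pre x, (size pre + size s + 1 = n)%N -> c (pre ++ x :: s) = c (pre ++ rcons s x).
Proof.
move=> sym; elim=> [|y s IH] pre x hs //.
rewrite sym; last by move: hs => /=; lia.
by rewrite -cat_rcons IH ?cat_rcons // size_rcons; move: hs => /=; lia.
Qed.

Lemma swap_invariant_rot c n : swap_invariant c n ->
  forall u v, (size u + size v = n)%N -> c (u ++ v) = c (v ++ u).
Proof.
move=> sym; elim=> [|x u IH] v hs; first by rewrite cats0.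
rewrite /= -[x :: _]cat0s (swap_invariant_rcons sym) /=; last first.
  by move: hs; rewrite size_cat /=; lia.
by rewrite rcons_cat IH ?cat_rcons // size_rcons; move: hs => /=; lia.
Qed.

(* Up to permutation, any sequence is reached from [nseq n.+1 k0] by
   repeatedly changing the last entry, and on each fibre [ks ++ [:: _]] one
   common value determines all others. *)
Lemma swap_invariant_eq c1 c2 n (k0 : T) :
  swap_invariant c1 n.+1 -> swap_invariant c2 n.+1 ->
  (forall g, size g = n.+1 -> c1 g != 0) ->
  c1 (nseq n.+1 k0) = c2 (nseq n.+1 k0) ->
  (forall ks, size ks = n -> exists a1 a2, a1 != 0 /\
     forall k, a1 * c1 (ks ++ [:: k]) = a2 * c2 (ks ++ [:: k])) ->
  forall g, size g = n.+1 -> c1 g = c2 g.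
Proof.
move=> sym1 sym2 c1_neq0 base prop.
have change_last ks k k' : size ks = n ->
    c1 (ks ++ [:: k']) = c2 (ks ++ [:: k']) -> c1 (ks ++ [:: k]) = c2 (ks ++ [:: k]).
  move=> hks e; have [a1 [a2 [a1_neq0 ha]]] := prop ks hks.
  have nz : c1 (ks ++ [:: k']) != 0 by rewrite c1_neq0 // size_cat hks addn1.
  have a12 : a1 = a2 by apply: (mulIf nz); rewrite {2}e; exact: ha.
  by apply: (mulfI a1_neq0); rewrite ha a12.
suff prefix m s : size s = m -> (m <= n.+1)%N ->
    c1 (nseq (n.+1 - m) k0 ++ s) = c2 (nseq (n.+1 - m) k0 ++ s).
  by move=> g hg; have := prefix _ g hg (leqnn _); rewrite subnn.
elim: m s => [|m IH] [|a s] //= hs hm; first by rewrite cats0; exact: base.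
case: hs => hs.
have {}IH : c1 (nseq (n - m).+1 k0 ++ s) = c2 (nseq (n - m).+1 k0 ++ s).
  by have := IH s hs (ltnW hm); have -> : (n.+1 - m = (n - m).+1)%N by lia.
have -> : (n.+1 - m.+1 = n - m)%N by lia.
set A := nseq (n - m) k0.
have hA : size A = (n - m)%N by rewrite size_nseq.
have to_last c : swap_invariant c n.+1 -> c (A ++ a :: s) = c ((s ++ A) ++ [:: a]).
  move=> sym; rewrite (swap_invariant_rot sym) /=; last by rewrite hA; lia.
  rewrite cats1 -[a :: _]cat0s (swap_invariant_rcons sym) //.
  by rewrite /= size_cat hA hs; lia.
have from_last c : swap_invariant c n.+1 ->
    c ((s ++ A) ++ [:: k0]) = c (nseq (n - m).+1 k0 ++ s).
  move=> sym; rewrite -catA (swap_invariant_rot sym); last first.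
    by rewrite !size_cat hA hs /=; lia.
  by rewrite /A -addn1 nseqD.
rewrite (to_last _ sym1) (to_last _ sym2) (change_last _ _ k0) //.
  by rewrite size_cat hA; lia.
by rewrite (from_last _ sym1) (from_last _ sym2).
Qed.

End SwapInvariance.

Section Model.
Context {R : realType} {K : nat} (dk : 'I_K -> nat).
Context {dE : measure_display} {E : measurableType dE}.
Context {dO : measure_display} {Om : measurableType dO}.
Variables (M : nat) (i0 : idx dk) (H : set (idx dk -> R)) (orth : bool).
Variables (P : probability Om R) (beta : Om -> idx dk -> R) (mu : probability E R).
Variables (B : set ('I_K -> R)) (D : ('I_K -> R) -> E -> \bar R).
Variable (Y : (idx dk -> R) -> (idx dk -> R) -> E -> 'I_K -> R).
Hypothesis hH : nbhd0 H.
Hypothesis model : model_assumptions M i0 (region H orth) P beta mu B D Y.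

Let V := Vfun mu B D.
Let Db := Dbar mu B D.

Lemma moment_nseq : moment P beta (nseq M i0) = (\int[P]_w (beta w i0 ^+ M)%:E)%E.
Proof. by apply: eq_integral => w _; rewrite big_nseq iter_mulr_1. Qed.

Lemma region_zerov : region H orth (zerov _).
Proof.
have [eH eH0 inH] := hH; split; last by move=> _ i.
by apply: inH => i; rewrite /zerov subrr normr0.
Qed.

Lemma Vfun_maxE u y : conv_hull B y -> obj Db u y \is a fin_num ->
  (forall z, conv_hull B z -> (obj Db u z <= obj Db u y)%E) -> V u = fine (obj Db u y).
Proof.
move=> hy fin_y max_y; rewrite /V /Vfun; congr fine; apply/eqP; rewrite eq_le.
rewrite ereal_sup_ubound /=; last by exists y.
by rewrite andbT; apply: ge_ereal_sup => _ [z hz <-]; exact: max_y.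
Qed.

Lemma Vfun_ge_affine y u : conv_hull B y -> Db y \is a fin_num ->
  \sum_i y i * u i + fine (Db y) <= V u.
Proof.
move=> hy fin_Dy; have [y' [hy' [fin_y' max_y']]] := V_max model u.
rewrite (Vfun_maxE hy' fin_y' max_y') -lee_fin fineK // EFinD fineK //.
exact: max_y'.
Qed.

(* Envelope theorem: the maximiser yb is a subgradient of the convex V at the
   index vector, hence equal to any partial derivative of V there. *)
Lemma envelope x b k : (exists l, has_pd_within setT V k (index_u b x) l) ->
  fine (Ybar_beta mu Y x b k) = pd setT V k (index_u b x).
Proof.
move=> [l hl]; rewrite (pd_val hl).
have [yb [hyb [hull [max_yb _]]]] := A2i model x b.
rewrite (proj2 (hyb k)) /=; set u := index_u b x in max_yb *.
have fin_obj : obj Db u yb \is a fin_num.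
  have [ys [hull_s [fin_s max_s]]] := V_max model u.
  have -> // : obj Db u yb = obj Db u ys.
  by apply/eqP; rewrite eq_le max_s // max_yb.
have fin_D : Db yb \is a fin_num by move: fin_obj; rewrite fin_numD => /andP[].
have Vu : V u = \sum_i yb i * u i + fine (Db yb).
  by rewrite (Vfun_maxE hull fin_obj max_yb) /obj -{1}(fineK fin_D) -EFinD.
apply/esym/(has_pd_subgradient _ hl) => h.
have := Vfun_ge_affine (shiftv u k h) hull fin_D.
by rewrite sum_mul_shiftv Vu; lra.
Qed.

Lemma pdn_Ybar_beta b k : exists2 r, 0 < r & forall js, (size js <= M)%N ->
  forall x, region H orth x -> nearv (zerov _) x r ->
  pdn (region H orth) (fun x => fine (Ybar_beta mu Y x b k)) js x =
  (\prod_(i <- js) b i) * pdn setT V (map tag js ++ [:: k]) (index_u b x).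
Proof.
have [eH eH0 inH] := hH; have [e e0 smoothV] := A5iii model.
pose r := Order.min eH (e / coef_norm b).
have r0 : 0 < r by rewrite lt_min eH0 divr_gt0 // coef_norm_gt0.
have ball_H y : nearv (zerov _) y r -> H y.
  by move=> hy; apply: inH => i; apply: lt_le_trans (hy i) _; rewrite ge_min lexx.
have ball_V y : nearv (zerov _) y r -> nearv (zerov _) (index_u b y) e.
  move=> hy i; apply: lt_le_trans (nearv_index_u b r0 hy i) _.
  have : r <= e / coef_norm b by rewrite ge_min lexx orbT.
  by rewrite ler_pdivlMr ?coef_norm_gt0 // mulrC.
exists r => //; elim=> [|j js IH] hsize x hx hxr.
  rewrite big_nil mul1r /=; apply: envelope.
  by have [[_ hl] _] := smoothV [:: k] isT _ (ball_V x hxr).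
have hsize' : (size (tag j :: (map tag js ++ [:: k])) <= M.+1)%N.
  by move: hsize; rewrite /= size_cat size_map /= addn1.
have [[_ [lg hlg]] _] := smoothV _ hsize' _ (ball_V x hxr).
rewrite big_cons /= (pd_val hlg); apply: pd_val.
have [dd dd0 sub] := nearv_subball hxr.
apply: (has_pd_within_index_u dd0 hx (region_shiftv_approach j ball_H hx hxr) _ hlg).
by move=> y hy hxy; apply: IH (ltnW hsize) y hy (sub y hxy).
Qed.

Lemma moment_fin_num (t : M.-tuple (idx dk)) : moment P beta t \is a fin_num.
Proof. exact: integrable_fin_num (A5ii model t). Qed.

Lemma pdn_Ybar_moment k (t : M.-tuple (idx dk)) :
  pdn (region H orth) (fun x => fine (Ybar P beta mu Y x k)) t (zerov _) =
  fine (moment P beta t) * pdn setT V (map tag t ++ [:: k]) (zerov _).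
Proof.
have [_ [_ [_ asf]]] := A5i model k t.
apply: EFin_inj; rewrite asf EFinM fineK ?moment_fin_num // -integralZr //; last first.
  exact: A5ii model t.
apply: eq_integral => w _; rewrite -EFinM; congr (_%:E).
have [r r0 chain] := pdn_Ybar_beta (beta w) k.
rewrite chain ?size_tuple ?index_u0 //; first exact: region_zerov.
by move=> i; rewrite /zerov subrr normr0.
Qed.

Lemma pdn_Vfun_swap : swap_invariant (fun g => pdn setT V g (zerov 'I_K)) M.+1.
Proof.
move=> pre a b post hs; have [e e0 smoothV] := A5iii model.
have z0 : nearv (zerov 'I_K) (zerov 'I_K) e by move=> i; rewrite /zerov subrr normr0.
rewrite !pdn_cat; apply: (eq_pdn_near _ _ z0) => u hu.
have [rho rho0 sub] := nearv_subball hu.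
have pd_near g c : (size (c :: g) <= M.+1)%N ->
    forall v, nearv u v rho -> exists l, has_pd_within setT (pdn setT V g) c v l.
  by move=> hg v hv; have [[_ hl] _] := smoothV _ hg v (sub v hv).
have cont g : (size g <= M.+1)%N -> contv (pdn setT V g) u.
  by move=> hg; have [_] := smoothV g hg u hu.
have size_le g : (size g <= size post + 2)%N -> (size g <= M.+1)%N.
  by move=> hg; rewrite -hs; apply: leq_trans hg _; rewrite -addnA leq_addl.
by rewrite /= (schwarz rho0 (pd_near post a _) (pd_near post b _)
  (pd_near (a :: post) b _) (pd_near (b :: post) a _)
  (cont (b :: a :: post) _) (cont (a :: b :: post) _)) // size_le // ?addn2.
Qed.

Lemma pdn_Vfun_neq0 g : size g = M.+1 -> pdn setT V g (zerov _) != 0.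
Proof. by move=> hg; have := A5iv model (Tuple (introT eqP hg)). Qed.

Lemma nonzero_moment_with_goods ks : size ks = M ->
  exists t : M.-tuple (idx dk), map tag t = ks /\ fine (moment P beta t) != 0.
Proof.
move=> hks; have [t [htag [_ hm]]] := A6 model (Tuple (introT eqP hks)).
exists t; split; last by rewrite fine_eq0 ?moment_fin_num.
suff /(congr1 val) : [tuple of map tag t] = Tuple (introT eqP hks) by [].
by apply: eq_from_tnth => m; rewrite tnth_map htag.
Qed.

End Model.

Theorem theorem1 (R : realType) (K : nat) (dk : 'I_K -> nat)
  (i0 : idx dk) (hi0 : val (tag i0) = 0%N /\ val (tagged i0) = 0%N)
  (M : nat) (hM : (1 <= M)%N)
  (dE : measure_display) (E : measurableType dE)
  (H : set (idx dk -> R)) (hH : nbhd0 H) (orth : bool)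
  (dO1 : measure_display) (Om1 : measurableType dO1) (P1 : probability Om1 R)
  (beta1 : Om1 -> idx dk -> R) (mu1 : probability E R) (B1 : set ('I_K -> R))
  (D1 : ('I_K -> R) -> E -> \bar R) (Y1 : (idx dk -> R) -> (idx dk -> R) -> E -> 'I_K -> R)
  (dO2 : measure_display) (Om2 : measurableType dO2) (P2 : probability Om2 R)
  (beta2 : Om2 -> idx dk -> R) (mu2 : probability E R) (B2 : set ('I_K -> R))
  (D2 : ('I_K -> R) -> E -> \bar R) (Y2 : (idx dk -> R) -> (idx dk -> R) -> E -> 'I_K -> R)
  (h1 : model_assumptions M i0 (region H orth) P1 beta1 mu1 B1 D1 Y1)
  (h2 : model_assumptions M i0 (region H orth) P2 beta2 mu2 B2 D2 Y2)
  (known_asf : forall x, region H orth x -> forall k : 'I_K,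
     Ybar P1 beta1 mu1 Y1 x k = Ybar P2 beta2 mu2 Y2 x k)
  (known_moment : (\int[P1]_w (beta1 w i0 ^+ M)%:E = \int[P2]_w (beta2 w i0 ^+ M)%:E)%E) :
  (forall t : M.-tuple (idx dk), moment P1 beta1 t = moment P2 beta2 t) /\
  (forall g : M.+1.-tuple 'I_K,
     pdn setT (Vfun mu1 B1 D1) g (zerov 'I_K) = pdn setT (Vfun mu2 B2 D2) g (zerov 'I_K)).
Proof.
pose c1 g := pdn setT (Vfun mu1 B1 D1) g (zerov 'I_K).
pose c2 g := pdn setT (Vfun mu2 B2 D2) g (zerov 'I_K).
have weights k (t : M.-tuple (idx dk)) :
    fine (moment P1 beta1 t) * c1 (map tag t ++ [:: k]) =
    fine (moment P2 beta2 t) * c2 (map tag t ++ [:: k]).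
  rewrite -(pdn_Ybar_moment hH h1) -(pdn_Ybar_moment hH h2).
  by apply: eq_pdn (region_zerov orth hH) => x hx; rewrite known_asf.
have size_tags k (t : M.-tuple (idx dk)) : size (map tag t ++ [:: k]) = M.+1.
  by rewrite size_cat size_map size_tuple addn1.
have c12 : forall g, size g = M.+1 -> c1 g = c2 g.
  apply: (swap_invariant_eq (k0 := tag i0) (pdn_Vfun_swap h1) (pdn_Vfun_swap h2)
    (pdn_Vfun_neq0 h1)).
  - have := weights (tag i0) (nseq_tuple M i0).
    rewrite !moment_nseq known_moment map_nseq -[in X in _ -> X]addn1 nseqD.
    have [int_M int_M_neq0] := A4 h2.
    by apply: mulfI; rewrite fine_eq0 // integrable_fin_num.
  - move=> ks /(nonzero_moment_with_goods h1) [t [<- m_neq0]].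
    exists (fine (moment P1 beta1 t)), (fine (moment P2 beta2 t)).
    by split => // k; apply: weights.
split=> [t|g]; last exact: c12 _ (size_tuple g).
have := weights (tag i0) t.
rewrite c12 // => /(mulIf (pdn_Vfun_neq0 h2 (size_tags _ t))) e.
by rewrite -(fineK (moment_fin_num h1 t)) e fineK ?(moment_fin_num h2).
Qed.
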